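(* Let $n\ge1$ and $\vec v=(v_1,\dots,v_n)\in\mathbb N_b^n$. Let $k$ be the largest index with $v_k=1$, and put $\vec v_l=(v_1,\dots,v_{k-1})$ and $\vec v_r'=(v_{k+1}-k,\dots,v_n-k)$. Then $\vec v\in\hat N^n$ if and only if $\vec v_l\in\hat N^{k-1}$ and $\vec v_r'\in\hat N^{n-k}$ (here $\hat N^0$ consists only of the empty vector, and a vector with a non-positive coordinate is not in any $\hat N^j$).
   Context: $\mathbb N_b^n=\{(v_1,\dots,v_n)\in\mathbb N^n:\ 1\le v_i\le i\}$. $Y_n$ is the set of planar rooted binary trees with $n$ internal vertices up to isotopy. A complete expression in $x_1,\dots,x_{n+1}$ is a full binary parenthesization of $x_1\cdots x_{n+1}$ (every product of two factors, including the outermost, in parentheses); trees correspond bijectively to complete expressions via $|\mapsto x_1$, $\tau_1\vee\tau_2\mapsto(E_1E_2)$ with consecutive relabelling, where $\tau_1\vee\tau_2$ is the tree with a new root, left subtree $\tau_1$, right subtree $\tau_2$. The name of $\tau\in Y_n$ is the vector $\vec v\in\mathbb N^n$ with $v_i=i$ if at least one left parenthesis stands immediately left of $x_i$ in the complete expression; otherwise the rightmost of the right parentheses immediately following $x_i$ matches a left parenthesis in the run immediately preceding some $x_j$, and $v_i=j$. $\hat N^n$ is the set of names of trees of $Y_n$ ($n\ge1$), and $\hat N^0=\{()\}$ is the name of the trivial tree $|$. *)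

From mathcomp Require Import all_boot.
Set Implicit Arguments. Unset Strict Implicit. Unset Printing Implicit Defensive.

(* Planar rooted binary trees, up to isotopy = this inductive type. *)
Inductive tree : Type := Leaf | Node of tree & tree.

Fixpoint internal (t : tree) : nat :=
  match t with Leaf => 0 | Node l r => (internal l + internal r).+1 end.

Fixpoint leaves (t : tree) : nat :=
  match t with Leaf => 1 | Node l r => leaves l + leaves r end.

Inductive tok : Type := LP | RP | X of nat.

(* complete expression of t, with variables x_(off+1), ..., x_(off + leaves t);
   |  |-> x_1 ,  t1 \/ t2 |-> ( E1 E2 ) with consecutive relabelling *)
Fixpoint expr_off (t : tree) (off : nat) : seq tok :=
  match t with
  | Leaf => [:: X off.+1]
  | Node l r => LP :: expr_off l off ++ expr_off r (off + leaves l) ++ [:: RP]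
  end.

Definition expr (t : tree) : seq tok := expr_off t 0.

Definition is_LP (a : tok) : bool := if a is LP then true else false.
Definition is_RP (a : tok) : bool := if a is RP then true else false.

Definition balanced (w : seq tok) : Prop :=
  count is_LP w = count is_RP w /\
  forall p, p <= size w -> count is_RP (take p w) <= count is_LP (take p w).

Definition matches (s : seq tok) (m q : nat) : Prop :=
  m < q /\ q < size s /\ nth RP s m = LP /\ nth LP s q = RP /\
  balanced (drop m.+1 (take q s)).

(* v (a seq of length n, v_i = nth 0 v i.-1) is the name of t, t with n internal vertices *)
Definition name_of (t : tree) (v : seq nat) : Prop :=
  let s := expr t in
  size v = internal t /\
  forall i p, 1 <= i <= internal t -> nth LP s p = X i ->
    ((0 < p /\ nth RP s p.-1 = LP) -> nth 0 v i.-1 = i) /\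
    (~ (0 < p /\ nth RP s p.-1 = LP) ->
       (* q: the rightmost of the right parentheses immediately following x_i;
          m: its matching left parenthesis, lying in the run of left
          parentheses immediately preceding x_j (at position pj) *)
       exists q m j pj,
         p < q /\ (forall r, p < r <= q -> nth LP s r = RP) /\
         nth LP s q.+1 <> RP /\
         matches s m q /\
         nth LP s pj = X j /\ m < pj /\
         (forall r, m <= r < pj -> nth RP s r = LP) /\
         nth 0 v i.-1 = j).

Definition hatN (n : nat) (v : seq nat) : Prop :=
  exists t : tree, internal t = n /\ name_of t v.

Definition Nb (n : nat) (v : seq nat) : Prop :=
  size v = n /\ forall i, 1 <= i <= n -> 1 <= nth 0 v i.-1 <= i.

(* In the complete expression (E_l E_r) of l \/ r, everything that determines the
   entry of a variable of E_r, or of a variable of E_l other than its last one x_k,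
   lies inside E_r resp. E_l; so these entries are those of the names of r (shifted
   by k = |l| + 1) and of l.  The run of ')' after x_k ends with the ')' closing E_l,
   whose '(' precedes x_1, so v_k = 1.  Thus the name of l \/ r is
   name(l) ++ 1 :: (name(r) + k), whose entries after position k all exceed k; as
   names are unique, the last 1 of a name marks the root split. *)

From HB Require Import structures.
From mathcomp Require Import all_boot zify.
Set Implicit Arguments. Unset Strict Implicit. Unset Printing Implicit Defensive.

Definition tok_eqb (x y : tok) : bool :=
  match x, y with
  | LP, LP | RP, RP => true
  | X a, X b => a == b
  | _, _ => false
  end.

Lemma tok_eqP : Equality.axiom tok_eqb.
Proof.
case=> [||a] [||b] /=; try by constructor.
by apply: (iffP eqP) => [->|[]].
Qed.

HB.instance Definition _ := hasDecEq.Build tok tok_eqP.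

Lemma leavesE t : leaves t = (internal t).+1.
Proof. by elim: t => //= l -> r ->; rewrite addSn addnS. Qed.

Definition shift_var (a : nat) (x : tok) : tok := if x is X j then X (a + j) else x.

Lemma shift_var0 : shift_var 0 =1 id. Proof. by case. Qed.

Lemma expr_off_shift t a off : expr_off t (a + off) = map (shift_var a) (expr_off t off).
Proof.
elim: t off => [|l IHl r IHr] off /=; first by rewrite addnS.
by rewrite !map_cat /= IHl -addnA IHr.
Qed.

Lemma expr_offE t off : expr_off t off = map (shift_var off) (expr t).
Proof. by rewrite /expr -expr_off_shift addn0. Qed.

Lemma count_X_expr_off t off j :
  count (pred1 (X j)) (expr_off t off) = (off < j <= off + leaves t).
Proof.
elim: t off => [|l IHl r IHr] off /=.
  rewrite addn0 addn1 /=; case: eqP => [[<-]|ne]; first lia.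
  by case: andP => // -[lt_j le_j]; case: ne; congr X; lia.
by rewrite !count_cat IHl IHr /=; lia.
Qed.

Lemma mem_expr_off t off j : (X j \in expr_off t off) = (off < j <= off + leaves t).
Proof. by rewrite -has_pred1 has_count count_X_expr_off; case: (_ && _). Qed.

Lemma last_expr_off t off : last LP (expr_off t off) != LP.
Proof. by case: t => //= l r; rewrite !last_cat. Qed.

Lemma nth0_expr_off_cat t off S : nth LP (expr_off t off ++ S) 0 <> RP.
Proof. by case: t. Qed.

Lemma nth0_expr_off_X t off j : nth LP (expr_off t off) 0 = X j -> t = Leaf.
Proof. by case: t. Qed.

Lemma nth_catR (T : Type) (d : T) (u v : seq T) k : nth d (u ++ v) (size u + k) = nth d v k.
Proof. by rewrite nth_cat ltnNge leq_addr addKn. Qed.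

Lemma nth_nseq_cat (T : Type) (d x : T) n B k : k < n -> nth d (nseq n x ++ B) k = x.
Proof. by move=> lt_k; rewrite nth_cat size_nseq lt_k nth_nseq lt_k. Qed.

Lemma nth_cat_nseq (T : Type) (d x : T) A n k : size A <= k < size A + n ->
  nth d (A ++ nseq n x) k = x.
Proof. by move=> /andP [le_k lt_k]; rewrite nth_cat ltnNge le_k /= nth_nseq ifT //; lia. Qed.

Lemma nth_X_lt (s : seq tok) p j : nth LP s p = X j -> p < size s.
Proof. by case: ltnP => // le_p; rewrite nth_default. Qed.

Lemma nth_X_default (s : seq tok) p j d : nth LP s p = X j -> nth d s p = X j.
Proof. by move=> Ep; rewrite (set_nth_default LP) ?Ep ?(nth_X_lt Ep). Qed.

Lemma nth_catr_X (P w : seq tok) p x : nth LP (P ++ w) p = X x -> X x \notin P ->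
  exists2 p', p = size P + p' & nth LP w p' = X x.
Proof.
rewrite nth_cat; case: ltnP => [lt_p Ep|le_p Ep]; first by rewrite -Ep mem_nth.
by exists (p - size P); rewrite ?subnKC.
Qed.

Lemma nth_catl_X (w S : seq tok) p x : nth LP (w ++ S) p = X x -> X x \notin S ->
  nth LP w p = X x.
Proof.
rewrite nth_cat; case: ltnP => // le_p Ep.
by rewrite -Ep mem_nth ?(nth_X_lt Ep).
Qed.

Lemma nth_mid_X (P S : seq tok) p x : nth LP (P ++ X x :: S) p = X x ->
  X x \notin P -> X x \notin S -> p = size P.
Proof.
move=> /nth_catr_X Ep /Ep [[|p'] -> /= Ep'] notS; first by rewrite addn0.
by case/negP: notS; rewrite -Ep' mem_nth ?(nth_X_lt Ep').
Qed.

Lemma nth_map_shift_var a w p j : nth LP (map (shift_var a) w) p = X (a + j) -> nth LP w p = X j.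
Proof.
case: (ltnP p (size w)) => [lt_p|le_p]; last by rewrite nth_default ?size_map.
by rewrite (nth_map LP) //; case: (nth LP w p) => //= k [/addnI ->].
Qed.

Lemma balanced_cat w1 w2 : balanced w1 -> balanced w2 -> balanced (w1 ++ w2).
Proof.
move=> [c1 P1] [c2 P2]; split; first by rewrite !count_cat c1 c2.
move=> p Hp; rewrite take_cat; case: ltnP => H.
  by apply: P1; exact: ltnW.
rewrite !count_cat c1 leq_add2l; apply: P2; rewrite size_cat in Hp; lia.
Qed.

Lemma balanced_wrap w : balanced w -> balanced (LP :: w ++ [:: RP]).
Proof.
move=> [c P]; split; first by rewrite /= !count_cat /= c; lia.
case=> [|p] Hp //=; rewrite take_cat; case: ltnP => H.
  by have := P p (ltnW H); lia.
rewrite !count_cat c; case: (p - size w) => [|k] /=; lia.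
Qed.

Lemma balanced_expr_off t off : balanced (expr_off t off).
Proof.
elim: t off => [|l IHl r IHr] off; first by split=> // -[|[|p]].
by rewrite /= catA; apply/balanced_wrap/balanced_cat.
Qed.

Lemma balanced_map_shift_var a w : balanced w -> balanced (map (shift_var a) w).
Proof.
have cntL u : count is_LP (map (shift_var a) u) = count is_LP u by elim: u => //= -[||?] u ->.
have cntR u : count is_RP (map (shift_var a) u) = count is_RP u by elim: u => //= -[||?] u ->.
move=> [c P]; split; first by rewrite cntL cntR.
by move=> p; rewrite size_map -map_take cntL cntR; apply: P.
Qed.

Lemma matches_lt (s : seq tok) m1 m2 q : m1 < m2 -> matches s m1 q -> ~ matches s m2 q.
Proof.
move=> lt_m [_ [lt_q [_ [_ [C1 P1]]]]] [lt_m2 [_ [E2 [_ [C2 _]]]]].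
have size_w : size (take q s) = q by rewrite size_take lt_q.
set w := take q s in size_w C1 P1 C2.
set D1 := drop m1.+1 w in C1 P1.
have [k Ek] : exists k, m2 = k + m1.+1 by exists (m2 - m1.+1); lia.
have splitD1 : D1 = take k D1 ++ LP :: drop m2.+1 w.
  rewrite -{1}(cat_take_drop k D1) /D1 drop_drop -Ek; congr (_ ++ _).
  by rewrite (drop_nth RP) ?size_w // nth_take // E2.
have := P1 k; rewrite size_drop size_w => /(_ ltac:(lia)).
move: C1; rewrite {1 2}splitD1 !count_cat /= C2; lia.
Qed.

Lemma matches_inj (s : seq tok) m1 m2 q : matches s m1 q -> matches s m2 q -> m1 = m2.
Proof.
move=> M1 M2; case: (ltngtP m1 m2) => // lt_m.
  by case: (matches_lt lt_m M1).
by case: (matches_lt lt_m M2).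
Qed.

Definition lp_before (s : seq tok) (p : nat) : Prop := 0 < p /\ nth RP s p.-1 = LP.

Definition closed_to (s : seq tok) (p x : nat) : Prop :=
  exists q m j pj,
    p < q /\ (forall r, p < r <= q -> nth LP s r = RP) /\
    nth LP s q.+1 <> RP /\ matches s m q /\
    nth LP s pj = X j /\ m < pj /\
    (forall r, m <= r < pj -> nth RP s r = LP) /\ x = j.

Definition name_entry (s : seq tok) (p i x : nat) : Prop :=
  (lp_before s p -> x = i) /\ (~ lp_before s p -> closed_to s p x).

Lemma name_ofE t v : name_of t v <->
  size v = internal t /\ forall i p, 1 <= i <= internal t ->
    nth LP (expr t) p = X i -> name_entry (expr t) p i (nth 0 v i.-1).
Proof. by []. Qed.

Lemma lp_before_dec s p : lp_before s p \/ ~ lp_before s p.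
Proof.
rewrite /lp_before; case: (posnP p) => [->|p_gt0]; first by right; case.
by case: (nth RP s p.-1) => [||j]; [left | right=> -[] | right=> -[]].
Qed.

Lemma closed_to_unique s p x y : closed_to s p x -> closed_to s p y -> x = y.
Proof.
move=> [q1 [m1 [j1 [pj1 [pq1 [run1 [stop1 [M1 [X1 [mp1 [lp1 ->]]]]]]]]]]].
move=> [q2 [m2 [j2 [pj2 [pq2 [run2 [stop2 [M2 [X2 [mp2 [lp2 ->]]]]]]]]]]].
have eq_q : q1 = q2.
  case: (ltngtP q1 q2) => // lt_q; [case: stop1; apply: run2 | case: stop2; apply: run1]; lia.
subst q2; have eq_m := matches_inj M1 M2; subst m2.
case: (ltngtP pj1 pj2) => [lt_pj|lt_pj|eq_pj]; last by move: X1; rewrite eq_pj X2 => -[].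
- by have := lp2 pj1; rewrite (nth_X_default _ X1) => /(_ ltac:(lia)).
- by have := lp1 pj2; rewrite (nth_X_default _ X2) => /(_ ltac:(lia)).
Qed.

Lemma name_entry_unique s p i x y : name_entry s p i x -> name_entry s p i y -> x = y.
Proof.
move=> [lp_x cl_x] [lp_y cl_y]; have [lp|not_lp] := lp_before_dec s p.
  by rewrite lp_x ?lp_y.
exact: closed_to_unique (cl_x not_lp) (cl_y not_lp).
Qed.

Lemma name_of_unique t v w : name_of t v -> name_of t w -> v = w.
Proof.
rewrite !name_ofE => -[size_v ent_v] [size_w ent_w].
apply: (@eq_from_nth _ 0) => [|i]; first by rewrite size_v size_w.
rewrite size_v => lt_i.
have /(nthP LP) [p _ Ep] : X i.+1 \in expr t by rewrite mem_expr_off leavesE; lia.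
by apply: (name_entry_unique (ent_v _ _ _ Ep) (ent_w _ _ _ Ep)); lia.
Qed.

Section Embedding.

Variables (P w S : seq tok) (a : nat).
Local Notation s := (P ++ map (shift_var a) w ++ S).

Lemma nth_embed d k : k < size w -> nth d s (size P + k) = shift_var a (nth d w k).
Proof. by move=> lt_k; rewrite nth_catR nth_cat size_map lt_k (nth_map d). Qed.

Lemma nth_embed_sub d r : size P <= r < size P + size w ->
  nth d s r = shift_var a (nth d w (r - size P)).
Proof. by move=> /andP [le_r lt_r]; rewrite -{1}(subnKC le_r) nth_embed //; lia. Qed.

Lemma segment_embed x y : y <= size w ->
  drop (size P + x) (take (size P + y) s) = map (shift_var a) (drop x (take y w)).
Proof.
move=> le_y; rewrite takeD (take_size_cat _ (erefl (size P))).
rewrite (drop_size_cat _ (erefl (size P))) takel_cat ?size_map //.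
by rewrite (addnC (size P)) -drop_drop drop_size_cat // map_drop map_take.
Qed.

Lemma lp_before_embed p : p < size w -> 0 < p \/ last LP P != LP ->
  lp_before s (size P + p) <-> lp_before w p.
Proof.
move=> lt_p; case: (posnP p) => [-> [//|last_P] | p_gt0 _].
  rewrite /lp_before addn0; split=> [[_]|[]//].
  case/lastP: P last_P => [//|u z]; rewrite last_rcons size_rcons /= -cats1 -catA.
  by move=> z_LP; rewrite -[size u]addn0 nth_catR => /= Ez; rewrite Ez in z_LP.
rewrite /lp_before (_ : (size P + p).-1 = size P + p.-1); last lia.
rewrite nth_embed; last lia.
by case: (nth RP w p.-1) => [||j] /=; split=> -[] // _ _; split=> //; lia.
Qed.

Lemma closed_to_embed p x : (exists p2 j2, p < p2 /\ nth LP w p2 = X j2) ->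
  closed_to w p x -> closed_to s (size P + p) (a + x).
Proof.
move=> [p2 [j2 [lt_p2 Ep2]]].
move=> [q [m [j [pj [lt_pq [run [stop [[lt_mq [lt_q [Em [Eq bal]]]] [Epj [lt_mpj [lps ->]]]]]]]]]]].
have lt_q2 : q < p2.
  by case: (ltnP q p2) => // le_p2; have := run p2; rewrite Ep2 => /(_ ltac:(lia)).
have lt_p2w := nth_X_lt Ep2; have lt_pjw := nth_X_lt Epj.
exists (size P + q), (size P + m), (a + j), (size P + pj).
split; first lia.
split.
  by move=> r lt_r; rewrite nth_embed_sub ?run //; lia.
split.
  by rewrite -addnS nth_embed; [case: (nth LP w q.+1) stop | lia].
split.
  split; first lia.
  split; first by rewrite !size_cat size_map; lia.
  rewrite !nth_embed ?Em ?Eq //; try lia.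
  split=> //; split=> //.
  by rewrite -addnS segment_embed; [apply: balanced_map_shift_var | lia].
split; first by rewrite nth_embed ?Epj.
split; first lia.
split=> // r lt_r; rewrite nth_embed_sub ?lps //; lia.
Qed.

(* A later variable of w keeps the run of ')' after position p, hence the whole
   closing data of x_i, inside w. *)
Lemma name_entry_embed p i x : p < size w -> 0 < p \/ last LP P != LP ->
  (exists p2 j2, p < p2 /\ nth LP w p2 = X j2) ->
  name_entry w p i x -> name_entry s (size P + p) (a + i) (a + x).
Proof.
move=> lt_p side later [lp cl]; rewrite /name_entry lp_before_embed //.
by split=> [/lp -> | /cl]; last exact: closed_to_embed.
Qed.
End Embedding.

Lemma expr_off_first t off : exists c rest, expr_off t off = nseq c LP ++ X off.+1 :: rest.
Proof.
elim: t off => [|l IHl r _] off /=; first by exists 0, [::].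
have [c [rest ->]] := IHl off.
by exists c.+1, (rest ++ expr_off r (off + leaves l) ++ [:: RP]); rewrite /= -catA.
Qed.

Lemma expr_off_Node_last t off : 0 < internal t -> exists u z d,
  expr_off t off = u ++ z :: X (off + leaves t) :: nseq d.+1 RP /\ z != LP.
Proof.
elim: t off => [//|l _ r IHr] off _.
case: r IHr => [|r1 r2] IHr.
  rewrite [expr_off _ _]/= /= addn1 addnS.
  case/lastP: (expr_off l off) (last_expr_off l off) => [//|u z].
  by rewrite last_rcons => z_LP; exists (LP :: u), z, 0; rewrite -cats1 -catA.
have [u [z [d [E z_LP]]]] := IHr (off + leaves l) isT.
exists (LP :: expr_off l off ++ u), z, d.+1; split=> //.
have -> : expr_off (Node l (Node r1 r2)) off =
  LP :: expr_off l off ++ expr_off (Node r1 r2) (off + leaves l) ++ [:: RP] by [].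
by rewrite E [leaves (Node l _)]/= addnA -[d.+2]addn1 nseqD /= -!catA.
Qed.

Lemma expr_off_later_X t off p j : nth LP (expr_off t off) p = X j -> j < off + leaves t ->
  exists p2 j2, p < p2 /\ nth LP (expr_off t off) p2 = X j2.
Proof.
case: t => [|l r]; first by case: p => [|[|p]] //= -[<-]; lia.
have [u [z [d [-> _]]]] := @expr_off_Node_last (Node l r) off isT.
move=> Ep lt_j; exists (size u).+1, (off + leaves (Node l r)).
split; last by rewrite -[(size u).+1]addn1 nth_catR.
move: Ep; rewrite nth_cat; case: ltnP => [lt_p _|le_p]; first lia.
case E: (p - size u) => [|[|k]] /= Ep; first lia.
  by move: lt_j; case: Ep => /= <-; lia.
by case: k E Ep => [|k] _ //=; rewrite nth_nseq; case: ifP.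
Qed.

Lemma matches_wrap (P W S : seq tok) : balanced W ->
  matches (P ++ LP :: W ++ RP :: S) (size P) (size P + (size W).+1).
Proof.
move=> bal; split; first lia.
split; first by rewrite !size_cat /= !size_cat /=; lia.
split; first by rewrite -[size P]addn0 nth_catR.
split; first by rewrite nth_catR /= -[size W]addn0 nth_catR.
rewrite takeD (take_size_cat _ (erefl (size P))) (drop_size_cat _ (erefl (size P))) /=.
by rewrite take_size_cat // -addn1 addnC -drop_drop drop_size_cat //= drop0.
Qed.

Lemma expr_off_Node_wrap t off : 0 < internal t ->
  exists W, expr_off t off = LP :: W ++ [:: RP] /\ balanced W.
Proof.
case: t => // l r _; exists (expr_off l off ++ expr_off r (off + leaves l)).
by rewrite /= catA; split=> //; apply: balanced_cat; apply: balanced_expr_off.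
Qed.

Lemma closed_to_last_var t off P S u z d : 0 < internal t -> nth LP S 0 <> RP ->
  expr_off t off = u ++ z :: X (off + leaves t) :: nseq d.+1 RP ->
  closed_to (P ++ expr_off t off ++ S) (size P + (size u).+1) off.+1.
Proof.
move=> int_t S0; set E := expr_off t off => Eu.
have [W [EW balW]] := expr_off_Node_wrap off int_t.
have [c [rest Ec]] := expr_off_first t off.
rewrite -/E in EW Ec.
have sizeE : size E = size u + d.+3 by rewrite Eu size_cat /= size_nseq.
have nthE k dflt : k < size E -> nth dflt (P ++ E ++ S) (size P + k) = nth dflt E k.
  by move=> lt_k; rewrite nth_catR nth_cat lt_k.
have size_c : c < size E by rewrite Ec size_cat size_nseq /=; lia.
have c_gt0 : 0 < c by case: c Ec size_c => // Ec; rewrite Ec in EW.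
(* The ')' closing E matches its '(', the first of the run of '(' before x_(off+1). *)
exists (size P + (size u).+1 + d.+1), (size P), off.+1, (size P + c).
split; first lia.
split.
  move=> r lt_r; rewrite -(subnKC (_ : size P <= r)) ?nthE; try lia.
  rewrite Eu -[z :: _]/([:: z; X _] ++ nseq d.+1 RP) catA nth_cat_nseq // size_cat /=; lia.
split.
  rewrite (_ : _.+1 = size P + (size E + 0)) ?nth_catR //; lia.
split.
  rewrite (_ : _ + d.+1 = size P + (size W).+1); last first.
    by move: sizeE; rewrite EW /= size_cat /=; lia.
  by rewrite EW /= -catA; apply: matches_wrap.
split; first by rewrite nthE // Ec nth_cat size_nseq ltnn subnn.
split; first lia.
split=> // r lt_r; rewrite -(subnKC (_ : size P <= r)) ?nthE; try lia.
by rewrite Ec nth_nseq_cat //; lia.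
Qed.

Lemma name_entry_last_var t off P S p : 0 < internal t -> nth LP S 0 <> RP ->
  X (off + leaves t) \notin P ++ S ->
  nth LP (P ++ expr_off t off ++ S) p = X (off + leaves t) ->
  name_entry (P ++ expr_off t off ++ S) p (off + leaves t) off.+1.
Proof.
move=> int_t S0; rewrite mem_cat negb_or => /andP [notin_P notin_S].
have [u [z [d [Eu z_LP]]]] := expr_off_Node_last off int_t.
have notin_uz : X (off + leaves t) \notin u ++ [:: z].
  have : count (pred1 (X (off + leaves t))) (expr_off t off) = 1.
    by rewrite count_X_expr_off leavesE; lia.
  rewrite Eu count_cat /= eqxx -has_pred1 has_count count_cat /=; lia.
have Es : P ++ expr_off t off ++ S =
    (P ++ u ++ [:: z]) ++ X (off + leaves t) :: nseq d.+1 RP ++ S.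
  by rewrite Eu -!catA.
rewrite {1}Es => /nth_mid_X ->; first last.
- by rewrite mem_cat negb_or mem_nseq notin_S.
- by rewrite mem_cat negb_or notin_P.
rewrite !size_cat addn1; split=> [[_]|_]; last exact: closed_to_last_var Eu.
by rewrite addnS /= Es -!catA nth_catR -[size u]addn0 nth_catR /= => z_eq; rewrite z_eq in z_LP.
Qed.

Fixpoint tree_name (t : tree) : seq nat :=
  if t is Node l r then tree_name l ++ 1 :: map (addn (leaves l)) (tree_name r) else [::].

Lemma size_tree_name t : size (tree_name t) = internal t.
Proof. by elim: t => //= l IHl r IHr; rewrite size_cat /= size_map IHl IHr addnS. Qed.

Lemma tree_name_gt0 t x : x \in tree_name t -> 0 < x.
Proof.
elim: t x => //= l IHl r IHr x; rewrite mem_cat inE => /or3P [/IHl //|/eqP -> //|].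
by case/mapP=> y /IHr y_gt0 ->; rewrite addn_gt0 y_gt0 orbT.
Qed.

Lemma expr_Node l r : expr (Node l r) = LP :: expr_off l 0 ++ expr_off r (leaves l) ++ [:: RP].
Proof. by rewrite /expr /= add0n. Qed.

Lemma name_entry_split l r p : nth LP (expr (Node l r)) p = X (leaves l) ->
  name_entry (expr (Node l r)) p (leaves l) 1.
Proof.
have notin_B : X (leaves l) \notin expr_off r (leaves l) ++ [:: RP].
  by rewrite mem_cat mem_expr_off negb_or ltnn.
rewrite expr_Node -cat1s; case: l notin_B => [|l1 l2] notin_B.
  by move/nth_mid_X => /(_ isT notin_B) ->; split=> // -[].
apply: name_entry_last_var => //; exact: nth0_expr_off_cat.
Qed.

Section NodeEntries.

Variables l r : tree.
Hypotheses (name_l : name_of l (tree_name l)) (name_r : name_of r (tree_name r)).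

Lemma name_entry_left i p : 0 < i < leaves l -> nth LP (expr (Node l r)) p = X i ->
  name_entry (expr (Node l r)) p i (nth 0 (tree_name l) i.-1).
Proof.
move=> lt_i; have notin_B : X i \notin expr_off r (leaves l) ++ [:: RP].
  by rewrite mem_cat mem_expr_off negb_or; apply/andP; split; [lia|].
rewrite expr_Node -cat1s => Ep.
have [p' -> /nth_catl_X /(_ notin_B) Ep'] := nth_catr_X Ep isT.
have p'_gt0 : 0 < p'.
  by case: p' Ep' => // /nth0_expr_off_X l_Leaf; rewrite l_Leaf /= in lt_i; lia.
have := @name_entry_embed [:: LP] (expr_off l 0) (expr_off r (leaves l) ++ [:: RP]) 0 p'
  i (nth 0 (tree_name l) i.-1).
rewrite !add0n (eq_map shift_var0) map_id; apply; first exact: nth_X_lt Ep'.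
- by left.
- by apply: expr_off_later_X Ep' _; rewrite add0n; case/andP: lt_i.
- by case: name_l => _; apply; [rewrite leavesE in lt_i; lia | exact: Ep'].
Qed.

Lemma name_entry_right i p : leaves l < i <= leaves l + internal r ->
  nth LP (expr (Node l r)) p = X i ->
  name_entry (expr (Node l r)) p i (leaves l + nth 0 (tree_name r) (i - leaves l).-1).
Proof.
move=> lt_i; set j := i - leaves l; have -> : i = leaves l + j by rewrite /j; lia.
have notin_A : X (leaves l + j) \notin LP :: expr_off l 0.
  by rewrite inE mem_expr_off negb_or; apply/andP; split=> //; rewrite /j; lia.
rewrite expr_Node (expr_offE r) -cat_cons => Ep.
have [p' -> /nth_catl_X /(_ isT) /nth_map_shift_var Ep'] := nth_catr_X Ep notin_A.
apply: name_entry_embed; first exact: nth_X_lt Ep'.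
- by right; rewrite /= last_expr_off.
- by apply: expr_off_later_X Ep' _; rewrite add0n leavesE /j; lia.
- by case: name_r => _; apply; [rewrite /j; lia | exact: Ep'].
Qed.

End NodeEntries.

Lemma name_of_tree_name t : name_of t (tree_name t).
Proof.
elim: t => [|l IHl r IHr]; rewrite name_ofE; first by split=> // i p /=; lia.
split=> [|i p i_range Ep]; first by rewrite size_tree_name.
have size_l := size_tree_name l; have leaves_l := leavesE l.
rewrite /= nth_cat size_l.
case: (ltngtP i (leaves l)) => [lt_i|gt_i|eq_i].
- by rewrite ifT; [apply: name_entry_left => //; lia | lia].
- rewrite ifF; last lia.
  have -> : i.-1 - internal l = (i - leaves l).-1.+1 by lia.
  rewrite /= (nth_map 0); last by rewrite size_tree_name; rewrite /= in i_range; lia.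
  by apply: name_entry_right => //; rewrite /= in i_range; lia.
- rewrite ifF; last lia.
  rewrite (_ : i.-1 - internal l = 0); last lia.
  by rewrite eq_i; apply: name_entry_split; rewrite -eq_i.
Qed.

Lemma hatNE n v : hatN n v <-> exists2 t, internal t = n & v = tree_name t.
Proof.
split=> [[t [int_t name_t]] | [t int_t ->]]; exists t => //.
exact: name_of_unique name_t (name_of_tree_name t).
by split=> //; apply: name_of_tree_name.
Qed.

Lemma index_last_one (v u w : seq nat) k : v = u ++ 1 :: w -> {in w, forall x, 1 < x} ->
  0 < k <= size v -> nth 0 v k.-1 = 1 -> (forall j, k < j <= size v -> nth 0 v j.-1 <> 1) ->
  k = (size u).+1.
Proof.
move=> ->; rewrite size_cat /= => w_gt1 k_range vk no_later.
case: (ltngtP k (size u).+1) => // [lt_k|gt_k].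
  by case: (no_later (size u).+1); [lia | rewrite nth_cat ltnn subnn].
move: vk; rewrite nth_cat ifF; last lia.
have -> : k.-1 - size u = (k.-1 - (size u).+1).+1 by lia.
move=> /= vk; have := w_gt1 _ (mem_nth 0 (_ : k.-1 - (size u).+1 < size w)).
by rewrite vk => /(_ ltac:(lia)).
Qed.

Theorem mainTheorem5 (n : nat) (v : seq nat) (k : nat) :
  1 <= n -> Nb n v ->
  1 <= k <= n -> nth 0 v k.-1 = 1 ->
  (forall j, k < j <= n -> nth 0 v j.-1 <> 1) ->
  (hatN n v <->
   (hatN k.-1 (take k.-1 v) /\
    hatN (n - k) (map (fun x => x - k) (drop k v)))).
Proof.
move=> n_gt0 [size_v _] k_range vk no_later; rewrite !hatNE.
split=> [[[|l r] int_t def_v] | [[l int_l name_l] [r int_r name_r]]].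
- by move: int_t n_gt0 => /= <-.
- have leaves_l := leavesE l.
  have k_eq : k = leaves l.
    rewrite leaves_l -size_tree_name; apply: (index_last_one def_v); rewrite ?size_v //.
    by move=> _ /mapP [y /tree_name_gt0 y_gt0 ->]; lia.
  subst v; rewrite /= in int_t; split.
    by exists l; [lia | rewrite /= take_size_cat // size_tree_name; lia].
  exists r; first lia.
  rewrite /= -cat_rcons drop_size_cat ?size_rcons ?size_tree_name -?map_comp; last lia.
  by rewrite k_eq map_id_in // => x _ /=; rewrite addKn.
- exists (Node l r) => /=; first by lia.
  rewrite -name_l -name_r leavesE int_l (prednK (proj1 (andP k_range))).
  rewrite -map_comp map_id_in => [|x x_in /=]; last first.
    rewrite subnKC // ltnW // -subn_gt0; apply: (@tree_name_gt0 r); rewrite -name_r; exact: map_f.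
  rewrite -{1}(cat_take_drop k.-1 v) (drop_nth 0) ?vk ?prednK //; lia.
Qed.
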